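(* $$\sigma(3,1)+\sigma(2,2)=3\lambda(4)=\frac{\pi^4}{32}.$$
   Context: For integers $t\geq 1$, $n\geq 1$ let $S_n^{(t)}=\sum_{k=1}^{n}\frac{1}{(2k-1)^t}$, and for integers $s\geq 2$, $t\geq 1$ let $\sigma(s,t)=\sum_{n\geq 1}\frac{S_n^{(t)}}{n^s}$. For real $s>1$, $\lambda(s)=\sum_{n\geq 1}\frac{1}{(2n-1)^s}$. *)

From Stdlib Require Import Reals.
From Coquelicot Require Import Coquelicot.
Open Scope R_scope.

Fixpoint oddH (n t : nat) : R :=
  match n with
  | O => 0
  | S m => oddH m t + / (2 * INR m + 1) ^ t
  end.

(* term of sigma(s,t), reindexed from n >= 1 to n >= 0 *)
Definition sigma_term (s t : nat) (n : nat) : R :=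
  oddH (S n) t / (INR (S n)) ^ s.

Definition sigma_st (s t : nat) : R := Series (sigma_term s t).

(* term of lambda(s): 1/(2n-1)^s for n >= 1, reindexed to n >= 0 *)
Definition lambda_term (s : R) (n : nat) : R := / Rpower (2 * INR n + 1) s.

Definition lambda_odd (s : R) : R := Series (lambda_term s).

(* lambda(2) = PI^2/8 and lambda(4) = PI^4/96 come from Euler's cotangent argument.
   For theta_k = (2k+1)PI/(4m), k < m, the numbers tan^2 theta_k are the m roots of the
   polynomial cosp m with cos(2m x) = cos^(2m) x * (cosp m)(tan^2 x), so Vieta's formulas give
   sum cot^2 theta_k = m(2m-1) and sum cot^4 theta_k = (8m^4 - 8m^2 + 3m)/3.  Since
   cot^2 y <= 1/y^2 <= 1 + cot^2 y on (0, PI/2), this pins the m-th partial sums of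
   lambda(2) and lambda(4) to within O(1/m) of their values.
   For the sigma values, the partial fractions
     1/(u^2 v^2) = (1/u^2 + 1/v^2)/(u+v)^2 + 2 (1/u + 1/v)/(u+v)^3
   with u = 2k+1, v = 2(n-k)+1 turn the n-th term of the Cauchy square of lambda(2)
   into half the n-th term of sigma(2,2) + sigma(3,1); hence
   sigma(2,2) + sigma(3,1) = 2 lambda(2)^2 = PI^4/32 = 3 lambda(4). *)

From Stdlib Require Import Reals Lra.
From Coquelicot Require Import Coquelicot.
From mathcomp Require Import all_boot all_order all_algebra Rstruct.
From mathcomp Require ring lra.
Set Implicit Arguments. Unset Strict Implicit. Unset Printing Implicit Defensive.
Open Scope R_scope.

Section InverseRootSums.
Import GRing.Theory ring.
Local Open Scope ring_scope.

Lemma coef_prod_1_subZX (R : comNzRingType) (s : seq R) :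
  [/\ (\prod_(a <- s) (1 - a *: 'X))`_0 = 1,
      (\prod_(a <- s) (1 - a *: 'X))`_1 = - \sum_(a <- s) a &
      2%:R * (\prod_(a <- s) (1 - a *: 'X))`_2 =
        (\sum_(a <- s) a) ^+ 2 - \sum_(a <- s) a ^+ 2].
Proof.
elim: s => [|a s [p0 p1 p2]]; first by rewrite !big_nil !coef1 /=; split; ring.
have coefM (q : {poly R}) i :
    ((1 - a *: 'X) * q)`_i = q`_i - (if i is i'.+1 then a * q`_i' else 0).
  by case: i => [|i]; rewrite mulrBl mul1r -scalerAl coefB coefZ coefXM //= mulr0.
rewrite !big_cons !coefM /= p0 p1; split; [ring | ring |].
by rewrite mulrBr p2; ring.
Qed.

Lemma sums_of_inverse_roots (F : fieldType) (p : {poly F}) (rs : seq F) :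
  p`_0 = 1 -> (size p <= (size rs).+1)%N -> all (root p) rs -> uniq rs ->
  \sum_(r <- rs) r^-1 = - p`_1 /\
  \sum_(r <- rs) r^-1 ^+ 2 = p`_1 ^+ 2 - 2%:R * p`_2.
Proof.
move=> p0 size_p roots_p uniq_rs.
have p_neq0 : p != 0 by apply: contra_eq_neq p0 => ->; rewrite coef0 eq_sym oner_eq0.
have {size_p} size_p : size p = (size rs).+1.
  by apply/eqP; rewrite eqn_leq size_p (max_poly_roots p_neq0).
have rs_neq0 r : r \in rs -> r != 0.
  move=> /(allP roots_p); apply: contraTneq => ->.
  by rewrite rootE horner_coef0 p0 oner_eq0.
have XsubC_factor r : r \in rs -> 'X - r%:P = (- r)%:P * (1 - r^-1 *: 'X).
  move=> /rs_neq0 r_neq0.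
  by rewrite mulrBr mulr1 -mul_polyC mulrA -polyCM mulNr divff // !polyCN polyC1 mulN1r opprK addrC.
have := all_roots_prod_XsubC size_p roots_p; rewrite uniq_rootsE => /(_ uniq_rs).
rewrite big_seq (eq_bigr _ XsubC_factor) -big_seq big_split /= -rmorph_prod.
rewrite mul_polyC scalerA; set c := _ * _ => p_eq.
have [q0 q1 q2] := coef_prod_1_subZX [seq r^-1 | r <- rs].
rewrite !big_map in q0 q1 q2.
have c1 : c = 1 by move: p0; rewrite p_eq coefZ q0 mulr1.
rewrite p_eq c1 scale1r q1 opprK; split=> //.
by rewrite q2; ring.
Qed.

End InverseRootSums.

Section TanPolynomials.
Import GRing.Theory Num.Theory ring.
Local Open Scope ring_scope.
Variable F : numFieldType.

(* See [cos_sin_mul_tan_polys]: the recursion adds 2x to the angle, using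
   cos 2x = cos^2 x (1 - tan^2 x) and sin 2x = 2 cos^2 x tan x. *)
Fixpoint tan_polys (j : nat) : {poly F} * {poly F} :=
  if j is j'.+1 then let: (p, q) := tan_polys j' in
    ((1 - 'X) * p - 2%:R *: ('X * q), 2%:R *: p + (1 - 'X) * q)
  else (1, 0).

Definition cosp j := (tan_polys j).1.
Definition sinp j := (tan_polys j).2.

Lemma cospS j : cosp j.+1 = (1 - 'X) * cosp j - 2%:R *: ('X * sinp j).
Proof. by rewrite /cosp /sinp /=; case: (tan_polys j). Qed.

Lemma sinpS j : sinp j.+1 = 2%:R *: cosp j + (1 - 'X) * sinp j.
Proof. by rewrite /cosp /sinp /=; case: (tan_polys j). Qed.

Lemma coef_1subXM (p : {poly F}) i :
  ((1 - 'X) * p)`_i = p`_i - (if i is i'.+1 then p`_i' else 0).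
Proof. by rewrite mulrBl mul1r coefB coefXM; case: i. Qed.

Lemma coef_cospS j i : (cosp j.+1)`_i =
  (cosp j)`_i - (if i is i'.+1 then (cosp j)`_i' + 2%:R * (sinp j)`_i' else 0).
Proof. by rewrite cospS coefB coef_1subXM coefZ coefXM; case: i => [|i] /=; ring. Qed.

Lemma coef_sinpS j i : (sinp j.+1)`_i =
  2%:R * (cosp j)`_i + (sinp j)`_i - (if i is i'.+1 then (sinp j)`_i' else 0).
Proof. by rewrite sinpS coefD coef_1subXM coefZ; case: i => [|i] /=; ring. Qed.

Lemma tan_polys_high_coef j :
  (forall i, (j < i)%N -> (cosp j)`_i = 0) /\ (forall i, (j <= i)%N -> (sinp j)`_i = 0).
Proof.
elim: j => [|j [cos_high sin_high]].
  by split=> -[|i] //= _; rewrite /cosp /sinp /= ?coef1 ?coef0.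
split=> -[|i] //; rewrite ltnS => ji.
  by rewrite coef_cospS !cos_high ?sin_high ?ltnS ?(ltnW ji) //; ring.
by rewrite coef_sinpS cos_high ?sin_high ?(leqW ji) //; ring.
Qed.

Lemma size_cosp j : (size (cosp j) <= j.+1)%N.
Proof. by apply/leq_sizeP => i; have [cos_high _] := tan_polys_high_coef j; apply: cos_high. Qed.

Lemma tan_polys_low_coef j : let x := j%:R : F in
  [/\ (cosp j)`_0 = 1, (sinp j)`_0 = 2%:R * x,
      (cosp j)`_1 = - (x * (2%:R * x - 1)),
      (sinp j)`_1 = - (x * (2%:R * x - 1) * (2%:R * x - 2%:R)) / 3%:R &
      (cosp j)`_2 = x * (2%:R * x - 1) * (2%:R * x - 2%:R) * (2%:R * x - 3%:R) / 12%:R].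
Proof.
have n3 : (3%:R : F) != 0 by rewrite pnatr_eq0.
have n12 : (12%:R : F) != 0 by rewrite pnatr_eq0.
elim: j => [|j [c0 s0 c1 s1 c2]].
  by rewrite /cosp /sinp /= !coefC /=; split; field.
rewrite !coef_cospS !coef_sinpS /= c0 s0 c1 s1 c2 !mulrSr.
by split; field.
Qed.

End TanPolynomials.

Lemma x_lt_tan x : 0 < x < PI / 2 -> x < tan x.
Proof.
move=> [x_gt0 x_lt].
have [c [tan_x [c_gt0 c_lt]]] :
    exists c, tan x - tan 0 = (tan c ^ 2 + 1) * (x - 0) /\ 0 < c < x.
  apply: MVT_cor2 => // c [c_ge0 c_le]; apply/is_derive_Reals/is_derive_tan.
  by apply: Rgt_not_eq; apply: cos_gt_0; lra.
have : 0 < tan c ^ 2 * x by apply: Rmult_lt_0_compat => //; apply: pow_lt; apply: tan_gt_0; lra.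
rewrite tan_0 in tan_x; lra.
Qed.

Lemma inv_sqr_between_cot2 y : 0 < y < PI / 2 ->
  / tan y ^ 2 <= / y ^ 2 <= 1 + / tan y ^ 2.
Proof.
move=> y_bounds.
have y_lt_tan := x_lt_tan y_bounds.
have sin_lt_y : sin y < y by apply: sin_lt_x; lra.
have sin_gt0 : 0 < sin y by apply: sin_gt_0; lra.
have cos_gt0 : 0 < cos y by apply: cos_gt_0; lra.
have one_add_cot2 : 1 + / tan y ^ 2 = / sin y ^ 2.
  have pythagoras := sin2_cos2 y; rewrite /Rsqr in pythagoras.
  rewrite /tan -[/ sin y ^ 2]Rmult_1_l -{2}pythagoras; field; lra.
have tan_gt0 : 0 < tan y by lra.
rewrite one_add_cot2; split; apply/Rlt_le/Rinv_0_lt_contravar; rewrite /pow; nra.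
Qed.

Definition theta (m k : nat) : R := (2 * INR k + 1) * PI / (4 * INR m).

Lemma theta_bounds m k : (k < m)%N -> 0 < theta m k < PI / 2.
Proof.
move=> lt_km.
have k_lt : INR k + 1 <= INR m by rewrite -S_INR; apply/le_INR/ltP.
have k_ge0 := pos_INR k; have pi_gt0 := PI_RGT_0.
have theta_eq : theta m k * (4 * INR m) = (2 * INR k + 1) * PI by rewrite /theta; field; lra.
split; nra.
Qed.

Lemma theta_inj m : (0 < m)%N -> injective (theta m).
Proof.
move=> m_gt0 k1 k2 eq_theta; apply: INR_eq.
have m_pos := lt_0_INR m (ltP m_gt0); have pi_gt0 := PI_RGT_0.
have : (2 * INR k1 + 1) * PI = (2 * INR k2 + 1) * PI.
  by apply: (Rmult_eq_reg_r (/ (4 * INR m))) => //; apply: Rinv_neq_0_compat; lra.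
nra.
Qed.

Lemma cos_theta_mul m k : (0 < m)%N -> cos (theta m k * INR (2 * m)) = 0.
Proof.
move=> m_gt0; have m_pos := lt_0_INR m (ltP m_gt0).
apply: cos_eq_0_1; exists (Z.of_nat k).
by rewrite -INR_IZR_INZ mult_INR /theta /=; field; lra.
Qed.

Lemma inv_sqr_theta m k : (0 < m)%N ->
  / theta m k ^ 2 = 16 * INR m ^ 2 / PI ^ 2 * / (2 * INR k + 1) ^ 2.
Proof.
move=> m_gt0; have m_pos := lt_0_INR m (ltP m_gt0).
have k_ge0 := pos_INR k; have pi_gt0 := PI_RGT_0.
by rewrite /theta; field; lra.
Qed.

Section CotangentSums.
Import GRing.Theory Num.Theory ring.
Local Open Scope ring_scope.

Lemma cos_sin_mul_tan_polys j (x : R) : cos x != 0 ->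
  cos (x *+ (2 * j)) = cos x ^+ (2 * j) * (cosp R j).[tan x ^+ 2] /\
  sin (x *+ (2 * j)) = cos x ^+ (2 * j) * tan x * (sinp R j).[tan x ^+ 2].
Proof.
move=> cos_neq0; elim: j => [|j [cos_mul sin_mul]].
  by rewrite /cosp /sinp /= mulr0n !hornerE cos_0 sin_0.
have -> : x *+ (2 * j.+1) = x *+ (2 * j) + (x + x) by rewrite mulnS !mulrnDr mulr2n addrC.
rewrite cospS sinpS !(cosD, sinD) cos_mul sin_mul.
rewrite !(hornerD, hornerN, hornerM, hornerZ, hornerX, hornerC, hornerMX).
set P := (cosp R j).[_]; set Q := (sinp R j).[_].
rewrite (_ : (2 * j.+1)%N = (2 * j).+2) ?mulnS // !exprS /tan RdivE.
by split; field.
Qed.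

Lemma root_cosp_tan_theta m k : (k < m)%N -> root (cosp R m) (tan (theta m k) ^+ 2).
Proof.
move=> lt_km; have [theta_gt0 theta_lt] := theta_bounds lt_km.
have cos_gt0 : Rlt 0 (cos (theta m k)) by apply: cos_gt_0; have := PI_RGT_0; lra.
have cos_neq0 : cos (theta m k) != 0 by apply/eqP/Rgt_not_eq.
have [cos_mul _] := cos_sin_mul_tan_polys m cos_neq0.
move: cos_mul; rewrite -mulr_natr -INRE cos_theta_mul ?(leq_ltn_trans _ lt_km) //.
by move/esym/eqP; rewrite mulf_eq0 expf_eq0 (negbTE cos_neq0) andbF.
Qed.

Lemma tan2_theta_inj m : (0 < m)%N ->
  {in gtn m &, injective (fun k => tan (theta m k) ^+ 2)}.
Proof.
move=> m_gt0 k1 k2 lt_k1m lt_k2m eq_tan2; apply: (theta_inj m_gt0).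
have tan_nneg k : (k < m)%N -> tan (theta m k) \is Num.nneg.
  by move=> /theta_bounds [? ?]; rewrite nnegrE; apply/RleP/Rlt_le/tan_gt_0.
have /tan_inj := pexpIrn (isT : (0 < 2)%N) (tan_nneg _ lt_k1m) (tan_nneg _ lt_k2m) eq_tan2.
have := PI_RGT_0; have := theta_bounds lt_k1m; have := theta_bounds lt_k2m.
by move=> ? ? ?; apply; lra.
Qed.

Lemma sums_inv_tan2_theta m : (0 < m)%N ->
  \sum_(k < m) (tan (theta m k) ^+ 2)^-1 = m%:R * (2%:R * m%:R - 1) /\
  \sum_(k < m) (tan (theta m k) ^+ 2)^-1 ^+ 2 =
    (8%:R * m%:R ^+ 4 - 8%:R * m%:R ^+ 2 + 3%:R * m%:R) / 3%:R.
Proof.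
move=> m_gt0; set rs := [seq tan (theta m k) ^+ 2 | k <- index_iota 0 m].
have [p0 _ p1 _ p2] := tan_polys_low_coef R m.
have size_p : (size (cosp R m) <= (size rs).+1)%N by rewrite size_map size_iota subn0 size_cosp.
have roots : all (root (cosp R m)) rs.
  by apply/allP => r /mapP [k]; rewrite mem_index_iota => /andP [_ lt_km] ->; apply: root_cosp_tan_theta.
have uniq_rs : uniq rs.
  by rewrite map_inj_in_uniq ?iota_uniq // => k1 k2; rewrite !mem_index_iota; apply: tan2_theta_inj.
have [] := sums_of_inverse_roots p0 size_p roots uniq_rs.
rewrite !big_map !big_mkord => -> ->.
by rewrite p1 p2; split; field.
Qed.

End CotangentSums.

Section PartialSumBounds.
Import Order.TTheory GRing.Theory Num.Theory ring lra.
Local Open Scope ring_scope.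

Lemma sum_sandwich (F : realDomainType) m (c w : nat -> F) :
  (forall k, (k < m)%N -> 0 <= c k <= w k /\ w k <= 1 + c k) ->
  [/\ \sum_(k < m) c k <= \sum_(k < m) w k,
      \sum_(k < m) w k <= m%:R + \sum_(k < m) c k,
      \sum_(k < m) c k ^+ 2 <= \sum_(k < m) w k ^+ 2 &
      \sum_(k < m) w k ^+ 2 <= m%:R + 2%:R * \sum_(k < m) c k + \sum_(k < m) c k ^+ 2].
Proof.
move=> cw; have sum1 : \sum_(k < m) (1 : F) = m%:R by rewrite sumr_const card_ord.
rewrite -sum1 mulr_sumr -!big_split /=.
by split; apply: ler_sum => k _; have [/andP [? ?] ?] := cw k (ltn_ord k); nra.
Qed.

Lemma inv_tan2_theta_bounds m k : (k < m)%N ->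
  let c := (tan (theta m k) ^+ 2)^-1 in
  0 <= c <= (theta m k ^+ 2)^-1 /\ (theta m k ^+ 2)^-1 <= 1 + c.
Proof.
move=> /theta_bounds/inv_sqr_between_cot2; rewrite !RpowE !RinvE !RplusE => -[lo hi] /=.
by rewrite invr_ge0 sqr_ge0; split; apply/RleP.
Qed.

Lemma inv_sqr_theta_odd m k : (0 < m)%N ->
  (theta m k ^+ 2)^-1 = 16%:R * m%:R ^+ 2 / PI ^+ 2 * ((2%:R * k%:R + 1) ^+ 2)^-1.
Proof. by move=> /(inv_sqr_theta k); rewrite !RealsE. Qed.

Lemma sum_odd_inv_pow_bounds m : (0 < m)%N ->
  let A := \sum_(k < m) ((2%:R * k%:R + 1) ^+ 2)^-1 in
  let B := \sum_(k < m) ((2%:R * k%:R + 1) ^+ 4)^-1 in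
  [/\ PI ^+ 2 / 8%:R - PI ^+ 2 / 16%:R / m%:R <= A, A <= PI ^+ 2 / 8%:R,
      PI ^+ 4 / 96%:R - PI ^+ 4 / 96%:R / m%:R <= B &
      B <= PI ^+ 4 / 96%:R + PI ^+ 4 / 96%:R / m%:R].
Proof.
move=> m_gt0 A B.
have [sum_c sum_c2] := sums_inv_tan2_theta m_gt0.
have [] := sum_sandwich (inv_tan2_theta_bounds (m := m)).
under [\sum_(k < m) (theta m k ^+ 2)^-1]eq_bigr do rewrite inv_sqr_theta_odd //.
under [\sum_(k < m) (theta m k ^+ 2)^-1 ^+ 2]eq_bigr do
  rewrite inv_sqr_theta_odd // exprMn exprVn -exprM.
rewrite -!mulr_sumr -/A -/B sum_c sum_c2.
set x : R := m%:R; set q := 16%:R * x ^+ 2 / PI ^+ 2 => A_lo A_hi B_lo B_hi.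
have pi_neq0 : PI != 0 by apply/eqP/PI_neq0.
have x_ge1 : 1 <= x by rewrite ler1n.
have x_neq0 : x != 0 by rewrite pnatr_eq0 -lt0n.
have pi2_gt0 : 0 < PI ^+ 2 by rewrite exprn_gt0 //; apply/RltP/PI_RGT_0.
have x_gt0 : 0 < x by rewrite ltr0n.
have q_gt0 : 0 < q by rewrite divr_gt0 // mulr_gt0 ?exprn_gt0.
have q2_gt0 : 0 < q ^+ 2 by rewrite exprn_gt0.
split.
- rewrite -(ler_pM2l q_gt0) (_ : q * _ = x * (2%:R * x - 1)) //.
  by rewrite /q; field; rewrite ?x_neq0 ?pi_neq0.
- rewrite -(ler_pM2l q_gt0) [q * (_ / _)](_ : _ = x + x * (2%:R * x - 1)) //.
  by rewrite /q; field; rewrite ?x_neq0 ?pi_neq0.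
- rewrite -(ler_pM2l q2_gt0) [q ^+ 2 * (_ - _)](_ : _ = (8%:R * x ^+ 4 - 8%:R * x ^+ 3) / 3%:R).
    by apply: le_trans B_lo; nra.
  by rewrite /q; field; rewrite ?x_neq0 ?pi_neq0.
- rewrite -(ler_pM2l q2_gt0) [q ^+ 2 * (_ + _)](_ : _ = (8%:R * x ^+ 4 + 8%:R * x ^+ 3) / 3%:R).
    by apply: le_trans B_hi _; nra.
  by rewrite /q; field; rewrite ?x_neq0 ?pi_neq0.
Qed.
End PartialSumBounds.

Definition odd_inv_pow (t n : nat) : R := / (2 * INR n + 1) ^ t.

Lemma oddH_sum t n : oddH n.+1 t = sum_n (odd_inv_pow t) n.
Proof.
rewrite sum_n_Reals; elim: n => [|n IH] /=; first by rewrite Rplus_0_l.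
by rewrite -IH.
Qed.

Lemma sum_n_odd_inv_pow t n :
  sum_n (odd_inv_pow t) n = (\sum_(k < n.+1) ((2%:R * k%:R + 1) ^+ t)^-1)%R.
Proof.
by rewrite sum_n_Reals sum_f_R0E big_mkord; apply: eq_bigr => k _; rewrite /odd_inv_pow !RealsE.
Qed.

Lemma is_lim_seq_add_div_INR L C : is_lim_seq (fun n => L + C / INR n.+1) L.
Proof.
have inv_INR : is_lim_seq (fun n => / INR n.+1) 0.
  apply/(is_lim_seq_incr_1 (fun n => / INR n)).
  by apply: (is_lim_seq_inv _ _ is_lim_seq_INR).
have := is_lim_seq_plus' _ _ _ _ (is_lim_seq_const L) (is_lim_seq_scal_l _ C _ inv_INR).
by rewrite Rmult_0_r Rplus_0_r.
Qed.

Lemma is_series_squeeze (a : nat -> R) L C :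
  (forall n, L - C / INR n.+1 <= sum_n a n <= L + C / INR n.+1) -> is_series a L.
Proof.
move=> bounds; suff : is_lim_seq (sum_n a) L by [].
apply: (is_lim_seq_le_le _ _ _ _ bounds); last exact: is_lim_seq_add_div_INR.
have := is_lim_seq_add_div_INR (L := L) (- C); apply: is_lim_seq_ext => n.
rewrite /Rdiv; ring.
Qed.

Section OddPowerSeries.
Import Order.TTheory GRing.Theory Num.Theory.

Lemma is_series_odd_inv_sqr : is_series (odd_inv_pow 2) (PI ^ 2 / 8).
Proof.
apply: (is_series_squeeze (C := PI ^ 2 / 16)) => n.
have [lo hi _ _] := sum_odd_inv_pow_bounds (ltn0Sn n).
rewrite sum_n_odd_inv_pow; split; apply/RleP; rewrite !RealsE //=.
by apply: le_trans hi _; rewrite lerDl !divr_ge0 ?sqr_ge0.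
Qed.

Lemma is_series_odd_inv_pow4 : is_series (odd_inv_pow 4) (PI ^ 4 / 96).
Proof.
apply: (is_series_squeeze (C := PI ^ 4 / 96)) => n.
have [_ _ lo hi] := sum_odd_inv_pow_bounds (ltn0Sn n).
by rewrite sum_n_odd_inv_pow; split; apply/RleP; rewrite !RealsE.
Qed.

End OddPowerSeries.

Lemma inv_sqr_mul_partial_fractions u v : 0 < u -> 0 < v ->
  / (u ^ 2 * v ^ 2) =
  (/ u ^ 2 + / v ^ 2) / (u + v) ^ 2 + 2 * (/ u + / v) / (u + v) ^ 3.
Proof. by move=> u_gt0 v_gt0; field; lra. Qed.

Lemma odd_inv_sqr_convolution n :
  sum_f_R0 (fun k => odd_inv_pow 2 k * odd_inv_pow 2 (n - k)) n =
  (sigma_term 2 2 n + sigma_term 3 1 n) / 2.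
Proof.
have n_ge0 := pos_INR n.
have split_term k : (k <= n)%coq_nat -> odd_inv_pow 2 k * odd_inv_pow 2 (n - k) =
    (odd_inv_pow 2 k + odd_inv_pow 2 (n - k)) * / (2 * INR n + 2) ^ 2 +
    (odd_inv_pow 1 k + odd_inv_pow 1 (n - k)) * (2 / (2 * INR n + 2) ^ 3).
  move=> le_kn; have k_ge0 := pos_INR k; have k_le := le_INR _ _ le_kn.
  rewrite /odd_inv_pow minus_INR // -Rinv_mult inv_sqr_mul_partial_fractions; try lra.
  by field; lra.
rewrite (PartSum.sum_eq _ _ _ split_term) plus_sum -!scal_sum !plus_sum !sum_f_R0_skip.
rewrite /sigma_term !oddH_sum !sum_n_Reals S_INR; field; lra.
Qed.

Lemma odd_inv_pow_gt0 t n : 0 < odd_inv_pow t n.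
Proof. by apply/Rinv_0_lt_compat/pow_lt; have := pos_INR n; lra. Qed.

Lemma is_series_sigma_22_add_31 :
  is_series (fun n => sigma_term 2 2 n + sigma_term 3 1 n) (PI ^ 4 / 32).
Proof.
have lam2 := is_series_odd_inv_sqr.
have abs_lam2 : ex_series (fun n => Rabs (odd_inv_pow 2 n)).
  exists (PI ^ 2 / 8); move: lam2; apply: is_series_ext => n.
  by rewrite Rabs_pos_eq //; apply/Rlt_le/odd_inv_pow_gt0.
have := is_series_scal_l 2 _ _ (is_series_mult _ _ _ _ lam2 lam2 abs_lam2 abs_lam2).
rewrite (_ : scal _ _ = PI ^ 4 / 32); last by rewrite /scal /= /mult /=; field.
apply: is_series_ext => n.
by rewrite odd_inv_sqr_convolution /scal /= /mult /=; field.
Qed.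

Lemma sigma_term_ge0 s t n : 0 <= sigma_term s t n.
Proof.
rewrite /sigma_term oddH_sum sum_n_Reals; apply: Rdiv_le_0_compat.
  by apply: cond_pos_sum => k; apply/Rlt_le/odd_inv_pow_gt0.
by apply: pow_lt; apply: lt_0_INR; exact: Nat.lt_0_succ.
Qed.

Lemma ex_series_nonneg_add (a b : nat -> R) :
  (forall n, 0 <= a n) -> (forall n, 0 <= b n) ->
  ex_series (fun n => a n + b n) -> ex_series a /\ ex_series b.
Proof.
move=> a_ge0 b_ge0 ex_ab; split; apply: ex_series_le ex_ab => n;
  rewrite /norm /= /abs /= Rabs_pos_eq //; have := a_ge0 n; have := b_ge0 n; lra.
Qed.

Lemma is_series_lambda_4 : is_series (lambda_term 4) (PI ^ 4 / 96).
Proof.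
move: is_series_odd_inv_pow4; apply: is_series_ext => n.
rewrite /lambda_term /odd_inv_pow (_ : 4 = INR 4) ?Rpower_pow //=; last by ring.
by have := pos_INR n; lra.
Qed.

Theorem mainTheorem16 :
  ex_series (sigma_term 3 1) /\ ex_series (sigma_term 2 2) /\
  ex_series (lambda_term 4) /\
  sigma_st 3 1 + sigma_st 2 2 = 3 * lambda_odd 4 /\
  3 * lambda_odd 4 = PI ^ 4 / 32.
Proof.
have sigma_sum := is_series_sigma_22_add_31.
have [ex22 ex31] : ex_series (sigma_term 2 2) /\ ex_series (sigma_term 3 1).
  apply: ex_series_nonneg_add (@sigma_term_ge0 2 2) (@sigma_term_ge0 3 1) _.
  by exists (PI ^ 4 / 32).
have lambda4 : lambda_odd 4 = PI ^ 4 / 96 := is_series_unique _ _ is_series_lambda_4.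
have sigma_st_sum : sigma_st 3 1 + sigma_st 2 2 = PI ^ 4 / 32.
  rewrite Rplus_comm /sigma_st -Series_plus //; exact: (is_series_unique _ _ sigma_sum).
split; [exact: ex31 | split; [exact: ex22 | split]].
  by exists (PI ^ 4 / 96); exact: is_series_lambda_4.
by rewrite sigma_st_sum lambda4; split; field.
Qed.
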